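(* Let $n\ge 1$. The totally nonnegative complete flag variety $\mathrm{Fl}_n^{\geq 0}$ equals the set $\{F\in \mathrm{Fl}_n \mid P_I(F)\geq 0 \text{ for all } I\subseteq [n]\}$, i.e. a complete flag $F$ lies in $\mathrm{Fl}_n^{\ge 0}$ if and only if it has a representing matrix all of whose flag minors are nonnegative.
   Context: $\mathrm{Fl}_n$ is the real complete flag variety: the set of chains $\{0\}=V_0\subsetneq V_1\subsetneq\cdots\subsetneq V_n=\mathbb{R}^n$ of linear subspaces. A flag is represented by an invertible real $n\times n$ matrix $M$ such that $V_i$ is the span of the top $i$ rows of $M$; two matrices represent the same flag iff they differ by left multiplication by an invertible lower triangular matrix. For $I\subseteq[n]$, the Plücker coordinate (flag minor) $P_I(M)$ is the determinant of the submatrix of $M$ in rows $1,\dots,|I|$ and columns $I$; for a flag $F$, $(P_I(F))_I$ is defined up to a positive or negative rescaling of each group $\{P_I: |I|=k\}$, and ''$P_I(F)\ge 0$ for all $I$'' means that some representing matrix $M$ of $F$ has $P_I(M)\ge 0$ for all $I\subseteq[n]$. A real matrix is totally positive if all its minors are positive. $\mathrm{Fl}_n^{>0}$ is the set of flags having a totally positive representing matrix, and $\mathrm{Fl}_n^{\geq 0}$ is the closure of $\mathrm{Fl}_n^{>0}$ in $\mathrm{Fl}_n$ in the Euclidean topology. *)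

From HB Require Import structures.
From mathcomp Require Import all_boot all_order all_algebra.
From mathcomp Require Import all_classical all_reals all_analysis.
Set Implicit Arguments. Unset Strict Implicit. Unset Printing Implicit Defensive.
Import Order.TTheory GRing.Theory Num.Theory.
Import numFieldTopology.Exports numFieldNormedType.Exports.
Local Open Scope classical_set_scope.
Local Open Scope ring_scope.

Section Flags.
Variable R : realType.
Variable n : nat.

Lemma card_set_ord_le (I : {set 'I_n}) : (#|I| <= n)%N.
Proof. by rewrite -[X in (_ <= X)%N]card_ord max_card. Qed.

Definition top_rows (I : {set 'I_n}) (i : 'I_#|I|) : 'I_n :=
  Ordinal (leq_trans (ltn_ord i) (card_set_ord_le I)).

(* Plücker coordinate (flag minor) P_I(M): determinant of the submatrix of M
   in rows 1..|I| and columns I (in increasing order; enum of a set of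
   ordinals lists it increasingly). *)
Definition flag_minor (M : 'M[R]_n) (I : {set 'I_n}) : R :=
  \det (mxsub (@top_rows I) (fun j : 'I_#|I| => @enum_val _ (pred_of_set I) j) M).

Definition incr k (f : 'I_k -> 'I_n) := forall i j : 'I_k, (i < j)%N -> (f i < f j)%N.

Definition totally_positive (M : 'M[R]_n) : Prop :=
  forall k (f g : 'I_k -> 'I_n), incr f -> incr g -> 0 < \det (mxsub f g M).

(* M and N represent the same flag: N = L M with L invertible lower triangular
   (is_trig_mx L <-> forall i j, i < j -> L i j = 0). *)
Definition same_flag (M N : 'M[R]_n) : Prop :=
  exists L : 'M[R]_n, [/\ L \in unitmx, is_trig_mx L & N = L *m M].

(* Representing matrices of flags: invertible matrices. *)
Definition flag_rep (M : 'M[R]_n) : Prop := M \in unitmx.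

Definition Fl_pos (M : 'M[R]_n) : Prop :=
  flag_rep M /\ exists N, totally_positive N /\ same_flag N M.

(* Open sets of Fl_n for the quotient (Euclidean) topology, described via
   their (saturated) preimages in GL_n: S is open in GL_n, hence in M_n. *)
Definition flag_open_set (S : set 'M[R]_n) : Prop :=
  open S /\ S `<=` flag_rep /\ (forall M N, same_flag M N -> S M -> S N).

(* Fl_n^{>=0}: closure of Fl_n^{>0} in Fl_n *)
Definition Fl_nonneg (M : 'M[R]_n) : Prop :=
  flag_rep M /\
  forall S, flag_open_set S -> S M -> exists N, S N /\ Fl_pos N.

End Flags.

(* A flag in the closure of Fl_n^{>0} cannot have two flag minors of the same
   size with strictly opposite signs: the flags where this happens form an open
   set, while totally positive flags have all their flag minors positive.
   Multiplying the rows by suitable signs then makes all flag minors nonnegative.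

   Conversely, let M be invertible with nonnegative flag minors.  The matrix G_v
   with entries 1 / cosh ((l - j) ln v) is a rescaled Cauchy matrix, hence
   totally positive, and it tends to the identity as v grows.  Since M has a
   nonzero flag minor of each size, the Cauchy-Binet formula makes every flag
   minor of M G_v positive.  Finally, if N has positive flag minors and T is the
   lower triangular matrix of falling factorials, then T diag(u^(2^l)) N is
   totally positive for small u > 0: in the Cauchy-Binet expansion of each of its
   minors, the term involving the top rows of N dominates. *)

From HB Require Import structures.
From mathcomp Require Import all_boot all_order all_algebra all_fingroup.
From mathcomp Require Import all_classical all_reals all_analysis.
From mathcomp Require Import ring lra.
Import Order.TTheory GRing.Theory Num.Theory.
Import numFieldTopology.Exports numFieldNormedType.Exports.
Set Implicit Arguments. Unset Strict Implicit. Unset Printing Implicit Defensive.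
Local Open Scope ring_scope.

(** * Increasing enumerations of sets of ordinals *)

Lemma incr_inj n k (f : 'I_k -> 'I_n) : incr f -> injective f.
Proof.
move=> incf i j fij; apply: val_inj; case: (ltngtP i j) => // /incf.
  by rewrite fij ltnn.
by rewrite fij ltnn.
Qed.

Lemma incr_leq n k (f : 'I_k -> 'I_n) : incr f -> (k <= n)%N.
Proof. by move=> /incr_inj /leq_card; rewrite !card_ord. Qed.

Lemma widen_ord_incr n k (hk : (k <= n)%N) : incr (widen_ord hk).
Proof. by []. Qed.

(* The default [d] is never reached when [#|K| = k]. *)
Definition enum_nth n (d : 'I_n) k (K : {set 'I_n}) (r : 'I_k) : 'I_n :=
  nth d (enum K) r.
Arguments enum_nth {n} d k K r.

Lemma sorted_enum_ord n : sorted (relpre val ltn) (enum 'I_n).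
Proof. by rewrite -sorted_map val_enum_ord iota_ltn_sorted. Qed.

Lemma sorted_enum_set n (K : {set 'I_n}) : sorted (relpre val ltn) (enum K).
Proof.
apply: (sorted_filter (leT := relpre val ltn)); first by move=> x y z; exact: ltn_trans.
by rewrite -enumT sorted_enum_ord.
Qed.

Section EnumNth.
Variables (n : nat) (d : 'I_n) (k : nat) (K : {set 'I_n}).
Hypothesis cardK : #|K| = k.

Lemma size_enum_set : size (enum K) = k.
Proof. by rewrite -cardE. Qed.

Lemma enum_nth_mem r : enum_nth d k K r \in K.
Proof. by rewrite -mem_enum mem_nth // size_enum_set. Qed.

Lemma enum_nth_incr : incr (enum_nth d k K).
Proof.
move=> r1 r2 lt12; apply: (sorted_ltn_nth (leT := relpre val ltn)) lt12;
  rewrite ?inE ?size_enum_set //.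
  by move=> x y z; exact: ltn_trans.
exact: sorted_enum_set.
Qed.

Lemma enum_nthP x : x \in K -> exists r, enum_nth d k K r = x.
Proof.
move=> xK; have ltxk : (index x (enum K) < k)%N by rewrite -size_enum_set index_mem mem_enum.
by exists (Ordinal ltxk); rewrite /enum_nth nth_index ?mem_enum.
Qed.
End EnumNth.

Lemma enum_nth_imset_incr n (d : 'I_n) k (f : 'I_k -> 'I_n) :
  incr f -> enum_nth d k [set f r | r in 'I_k] =1 f.
Proof.
move=> incf r; rewrite /enum_nth.
suff -> : enum [set f r | r in 'I_k] = map f (enum 'I_k).
  by rewrite (nth_map r) ?size_enum_ord // nth_ord_enum.
apply: (irr_sorted_eq (leT := relpre val ltn)) => //.
- by move=> x y z; exact: ltn_trans.
- by move=> x; rewrite /= ltnn.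
- exact: sorted_enum_set.
- rewrite sorted_map; apply: (@sub_sorted _ (relpre val ltn)) (sorted_enum_ord k).
  by move=> x y /incf.
- by move=> x; rewrite mem_enum; apply/imsetP/mapP => -[s _ ->]; exists s; rewrite ?mem_enum.
Qed.

(** * The Cauchy-Binet formula *)

Section CauchyBinet.
Variable R : comRingType.

Lemma det_mulmx_ffun k n (X : 'M[R]_(k, n)) (Y : 'M[R]_(n, k)) :
  \det (X *m Y) = \sum_(f : {ffun 'I_k -> 'I_n}) (\prod_i X i (f i)) * \det (rowsub f Y).
Proof.
transitivity (\sum_(s : 'S_k) \sum_(f : {ffun 'I_k -> 'I_n})
   (-1) ^+ s * ((\prod_i X i (f i)) * \prod_i Y (f i) (s i))).
  apply: eq_bigr => s _; rewrite -big_distrr /=; congr (_ * _).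
  rewrite (eq_bigr (fun i => \sum_j X i j * Y j (s i))); last by move=> i _; rewrite mxE.
  by rewrite bigA_distr_bigA /=; apply: eq_bigr => f _; rewrite big_split.
rewrite exchange_big /=; apply: eq_bigr => f _.
rewrite big_distrr /=; apply: eq_bigr => s _; rewrite mulrCA; congr (_ * (_ * _)).
by apply: eq_bigr => i _; rewrite mxE.
Qed.

Section Fibre.
Variables (k n : nat) (d : 'I_n) (K : {set 'I_n}).
Hypothesis cardK : #|K| = k.
Let h := enum_nth d k K.
Let enum_perm (s : 'S_k) : {ffun 'I_k -> 'I_n} := [ffun i => h (s i)].

Lemma sum_ffun_image_perm (F : {ffun 'I_k -> 'I_n} -> R) :
  \sum_(f : {ffun 'I_k -> 'I_n} | [set f i | i in 'I_k] == K) F f = \sum_(s : 'S_k) F (enum_perm s).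
Proof.
have h_inj : injective h by apply: incr_inj; exact: enum_nth_incr.
rewrite -(big_imset _ (h := enum_perm) (A := predT)) /=; last first.
  by move=> s t _ _ /ffunP st; apply/permP => i; apply: h_inj; have := st i; rewrite !ffunE.
apply: eq_bigl => f; apply/eqP/imsetP => [imf | [s _ ->]]; last first.
  apply/setP => x; apply/imsetP/idP => [[i _ ->] | xK]; first by rewrite ffunE enum_nth_mem.
  have [r <-] := enum_nthP d cardK xK.
  by exists ((s^-1)%g r) => //; rewrite ffunE permKV.
have fK i : f i \in K by rewrite -imf imset_f.
have [g hg] := fin_all_exists (fun i => enum_nthP d cardK (fK i)).
have g_inj : injective g.
  move=> i j gij; have fij : f i = f j by rewrite -!hg gij.
  have : #|[set f x | x in 'I_k]| == #|'I_k| by rewrite imf cardK card_ord.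
  by move/imset_injP; apply.
by exists (perm g_inj) => //; apply/ffunP => i; rewrite !ffunE permE /h hg.
Qed.

Lemma cauchy_binet_fibre (X : 'M[R]_(k, n)) (Y : 'M[R]_(n, k)) :
  \sum_(f : {ffun 'I_k -> 'I_n} | [set f i | i in 'I_k] == K)
    (\prod_i X i (f i)) * \det (rowsub f Y) =
  \det (colsub h X) * \det (rowsub h Y).
Proof.
have perm_rows s : \det (rowsub (enum_perm s) Y) = (-1) ^+ s * \det (rowsub h Y).
  have -> : rowsub (enum_perm s) Y = row_perm s (rowsub h Y).
    by apply/matrixP => i j; rewrite !mxE ffunE.
  by rewrite row_permE det_mulmx det_perm.
rewrite sum_ffun_image_perm; under eq_bigr do rewrite perm_rows.
rewrite [\det (colsub h X)]/determinant big_distrl /=; apply: eq_bigr => s _.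
rewrite mulrCA mulrA; congr (_ * _ * _).
by apply: eq_bigr => i _; rewrite !mxE ffunE.
Qed.
End Fibre.

Theorem cauchy_binet k n (d : 'I_n) (X : 'M[R]_(k, n)) (Y : 'M[R]_(n, k)) :
  \det (X *m Y) = \sum_(K : {set 'I_n} | #|K| == k)
      \det (colsub (enum_nth d k K) X) * \det (rowsub (enum_nth d k K) Y).
Proof.
rewrite det_mulmx_ffun.
rewrite (partition_big (fun f : {ffun 'I_k -> 'I_n} => [set f i | i in 'I_k]) predT) //=.
rewrite (bigID (fun K : {set 'I_n} => #|K| == k)) /= [X in _ + X]big1 ?addr0; last first.
  move=> K cardK; apply: big1 => f /eqP imf.
  have /injectivePn [i [j ij fij]] : ~~ injectiveb f.
    by apply: contra cardK => /injectiveP f_inj; rewrite -imf card_imset // card_ord.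
  by rewrite (determinant_alternate ij) ?mulr0 // => l; rewrite !mxE fij.
by apply: eq_bigr => K /eqP cardK; rewrite (cauchy_binet_fibre d cardK).
Qed.

Lemma det_mxsub_mulmx m p q k (d : 'I_p) (f : 'I_k -> 'I_m) (g : 'I_k -> 'I_q)
    (A : 'M[R]_(m, p)) (B : 'M[R]_(p, q)) :
  \det (mxsub f g (A *m B)) = \sum_(K : {set 'I_p} | #|K| == k)
      \det (mxsub f (enum_nth d k K) A) * \det (mxsub (enum_nth d k K) g B).
Proof.
have -> : mxsub f g (A *m B) = rowsub f A *m colsub g B.
  by apply/matrixP => i j; rewrite !mxE; apply: eq_bigr => l _; rewrite !mxE.
rewrite (cauchy_binet d); apply: eq_bigr => K _.
by congr (_ * _); congr determinant; apply/matrixP => i j; rewrite !mxE.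
Qed.

Lemma det_scale_rows_cols k (p q : 'I_k -> R) (A : 'M[R]_k) :
  \det (\matrix_(i, j) (p i * A i j * q j)) = (\prod_i p i) * \det A * \prod_j q j.
Proof.
have -> : \matrix_(i, j) (p i * A i j * q j) =
    diag_mx (\row_i p i) *m A *m diag_mx (\row_j q j).
  by apply/matrixP => i j; rewrite mul_mx_diag mul_diag_mx !mxE.
by rewrite !det_mulmx !det_diag; congr (_ * _ * _); apply: eq_bigr => i _; rewrite mxE.
Qed.
End CauchyBinet.

(** * Totally positive matrices close to the identity *)

Section CauchyMatrix.
Variable R : fieldType.

Definition cauchy_mx k (x y : 'I_k -> R) : 'M[R]_k := \matrix_(i, j) (x i + y j)^-1.

Lemma det_cauchy_mxS k (x y : 'I_(1 + k) -> R) :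
  (forall i j, x i + y j != 0) ->
  let a := x (lshift k ord0) in let b := y (lshift k ord0) in
  let x' i := x (rshift 1 i) in let y' j := y (rshift 1 j) in
  \det (cauchy_mx x y) = (a + b)^-1 *
    ((\prod_i ((x' i - a) / (x' i + b))) * \det (cauchy_mx x' y') *
      \prod_j ((y' j - b) / (a + y' j))).
Proof.
move=> xy_neq0 a b x' y'; set C := cauchy_mx x y.
pose o : 'I_(1 + k) := lshift k ord0.
pose E := block_mx 1%:M 0 (- (C o o)^-1 *: dlsubmx C) 1%:M : 'M[R]_(1 + k).
have schur : E *m C = block_mx (ulsubmx C) (ursubmx C) 0
     (\matrix_(i, j) ((x' i - a) / (x' i + b) * (x' i + y' j)^-1 * ((y' j - b) / (a + y' j)))).
  rewrite -[in LHS](submxK C) mulmx_block !mul1mx !mul0mx ?addr0 ?add0r.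
  congr block_mx; apply/matrixP => i j; rewrite !mxE big_ord1 !mxE.
    rewrite [j]ord1 -/o; have := xy_neq0 o o; have := xy_neq0 (rshift 1 i) o.
    by move=> h1 h2; field; rewrite h1 h2 oner_neq0.
  have := xy_neq0 o o; have := xy_neq0 (rshift 1 i) o.
  have := xy_neq0 o (rshift 1 j); have := xy_neq0 (rshift 1 i) (rshift 1 j).
  by rewrite /x' /y' /a /b /= -/o => h1 h2 h3 h4; field; rewrite h1 h2 h3 h4 oner_neq0.
have := congr1 determinant schur.
rewrite det_mulmx det_lblock !det1 mulr1 mul1r det_ublock => ->.
rewrite det_mx11 !mxE -det_scale_rows_cols; congr (_ * determinant _).
by apply/matrixP => i j; rewrite !mxE.
Qed.
End CauchyMatrix.

Lemma det_cauchy_mx_gt0 (R : numFieldType) k (x y : 'I_k -> R) :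
  (forall i j : 'I_k, (i < j)%N -> x i < x j) ->
  (forall i j : 'I_k, (i < j)%N -> y i < y j) ->
  (forall i, 0 < x i) -> (forall j, 0 < y j) -> 0 < \det (cauchy_mx x y).
Proof.
elim: k x y => [|k IHk] x y incx incy x_gt0 y_gt0; first by rewrite det_mx00.
have xy_gt0 i j : 0 < x i + y j by rewrite addr_gt0.
rewrite (det_cauchy_mxS (k := k)) => [|i j]; last by rewrite gt_eqF.
rewrite mulr_gt0 ?invr_gt0 // !mulr_gt0 //.
- by apply: prodr_gt0 => i _; rewrite divr_gt0 ?subr_gt0 ?incx.
- by apply: IHk => // i j ij; [apply: incx | apply: incy].
- by apply: prodr_gt0 => j _; rewrite divr_gt0 ?subr_gt0 ?incy.
Qed.

Section SechMatrix.
Variable R : realFieldType.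
Variable n : nat.

(* The entries are 1 / cosh ((l - j) ln v). *)
Definition sech_mx (v : R) : 'M[R]_n :=
  \matrix_(l, j) (2 * v ^+ l * v ^+ j / (v ^+ (2 * l) + v ^+ (2 * j))).

Lemma sech_mx_minor_gt0 (v : R) k (f g : 'I_k -> 'I_n) :
  1 < v -> incr f -> incr g -> 0 < \det (mxsub f g (sech_mx v)).
Proof.
move=> v_gt1 incf incg; have v_gt0 : 0 < v by apply: lt_trans v_gt1.
have -> : mxsub f g (sech_mx v) = \matrix_(r, c) (2 * v ^+ f r *
    cauchy_mx (fun r => v ^+ (2 * f r)) (fun c => v ^+ (2 * g c)) r c * v ^+ g c).
  by apply/matrixP => r c; rewrite !mxE mulrAC.
rewrite det_scale_rows_cols; apply: mulr_gt0; first apply: mulr_gt0.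
- by apply: prodr_gt0 => r _; rewrite mulr_gt0 ?exprn_gt0.
- apply: det_cauchy_mx_gt0 => [i j ij|i j ij|i|j]; rewrite ?exprn_gt0 //.
    by rewrite ltr_eXn2l // ltn_pmul2l // incf.
  by rewrite ltr_eXn2l // ltn_pmul2l // incg.
- by apply: prodr_gt0 => c _; rewrite exprn_gt0.
Qed.

Lemma sech_mx_id_dist (v : R) (l j : 'I_n) :
  1 < v -> `|sech_mx v l j - (l == j)%:R| <= 2 / v.
Proof.
move=> v_gt1; have v_gt0 : 0 < v by apply: lt_trans v_gt1.
have off_diag (a b : nat) : (a < b)%N ->
    2 * v ^+ a * v ^+ b / (v ^+ (2 * a) + v ^+ (2 * b)) <= 2 / v.
  move=> ab; rewrite !(mulnC 2) !exprM ler_pdivrMr ?addr_gt0 ?exprn_gt0 //.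
  set p := v ^+ a; set q := v ^+ b.
  have vpq : v * p <= q by rewrite -exprS ler_eXn2l.
  have -> : 2 * p * q = 2 / v * (v * p * q) by field; rewrite gt_eqF.
  have two_v_ge0 : 0 <= 2 / v by rewrite divr_ge0 ?ltW.
  apply: (@le_trans _ _ (2 / v * (q * q))).
    by rewrite ler_wpM2l // ler_wpM2r // exprn_ge0 ?ltW.
  by rewrite ler_wpM2l // -expr2 lerDr sqr_ge0.
have entry_ge0 (a b : 'I_n) : 0 <= sech_mx v a b.
  by rewrite mxE divr_ge0 ?mulr_ge0 ?addr_ge0 ?exprn_ge0 ?ltW.
case: (ltngtP l j) => [lj|jl|/val_inj lj].
- by rewrite -val_eqE ltn_eqF // subr0 ger0_norm // mxE off_diag.
- rewrite -val_eqE gtn_eqF // subr0 ger0_norm // mxE.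
  by rewrite [_ * v ^+ j]mulrAC addrC off_diag.
- have vj_gt0 : 0 < v ^+ j by rewrite exprn_gt0.
  rewrite lj eqxx mxE (mulnC 2) exprM.
  have -> : 2 * v ^+ j * v ^+ j / (v ^+ j ^+ 2 + v ^+ j ^+ 2) = 1.
    by field; rewrite gt_eqF // addr_gt0 // exprn_gt0.
  by rewrite subrr normr0 divr_ge0 ?ltW.
Qed.
End SechMatrix.

Lemma ball_mulmx_sech_mx (R : realFieldType) m n (M : 'M[R]_(m, n)) e :
  0 < e -> exists2 v, 1 < v & ball M e (M *m sech_mx n v).
Proof.
move=> e_gt0; pose C := \sum_i \sum_l `|M i l|.
have C_ge0 : 0 <= C by apply: sumr_ge0 => i _; apply: sumr_ge0.
pose v := 1 + 2 * (C + 1) / e.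
have v_gt1 : 1 < v by rewrite ltrDl divr_gt0 // mulr_gt0 // ltr_wpDl.
have v_gt0 : 0 < v by apply: lt_trans v_gt1.
have two_v_C_lt_e : 2 / v * C < e.
  rewrite mulrAC ltr_pdivrMr //.
  have -> : e * v = e + 2 * (C + 1) by rewrite /v mulrDr mulr1 mulrCA mulfV ?gt_eqF ?mulr1.
  lra.
exists v => //; split => // i j; rewrite /ball /=; apply: le_lt_trans two_v_C_lt_e.
have -> : M i j - (M *m sech_mx n v) i j =
    \sum_l M i l * ((l == j)%:R - sech_mx n v l j).
  rewrite -[in M i j](mulmx1 M) !mxE -sumrB; apply: eq_bigr => l _.
  by rewrite !mxE mulrBr.
apply: le_trans (ler_norm_sum _ _ _) _.
apply: (@le_trans _ _ (\sum_l `|M i l| * (2 / v))).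
  apply: ler_sum => l _; rewrite normrM ler_wpM2l // distrC.
  exact: sech_mx_id_dist.
rewrite -mulr_suml mulrC ler_wpM2l ?divr_ge0 ?(ltW v_gt0) //.
by rewrite /C (bigD1 i) //= lerDl sumr_ge0 // => i' _; apply: sumr_ge0.
Qed.

(** * Lower triangular matrices making all minors positive *)

Section FallingFactorial.
Variable R : numFieldType.

Definition ffact_poly c : {poly R} := \prod_(j <- iota 0 c) ('X - j%:R%:P).

Lemma size_ffact_poly c : size (ffact_poly c) = c.+1.
Proof. by rewrite size_prod_XsubC size_iota. Qed.

Lemma hornerE_ffact_poly c (x : R) : (ffact_poly c).[x] = \prod_(j <- iota 0 c) (x - j%:R).
Proof. by rewrite horner_prod; apply: eq_bigr => j _; rewrite hornerXsubC. Qed.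

Variable n : nat.

Definition ffact_mx : 'M[R]_n := \matrix_(i, l) (ffact_poly l).[(i : nat)%:R].

Lemma ffact_mx_trig : is_trig_mx ffact_mx.
Proof.
apply/is_trig_mxP => i l il.
by rewrite mxE hornerE_ffact_poly (big_rem (val i)) ?mem_iota ?il //= subrr mul0r.
Qed.

Lemma ffact_mx_unit : ffact_mx \in unitmx.
Proof.
rewrite unitmxE det_trig ?ffact_mx_trig // unitfE prodf_seq_neq0.
apply/allP => i _; rewrite mxE hornerE_ffact_poly prodf_seq_neq0.
by apply/allP => j; rewrite mem_iota subr_eq0 eqr_nat => /andP[_ ji]; rewrite gtn_eqF.
Qed.

Lemma ffact_mx_minor_gt0 k (hk : (k <= n)%N) (f : 'I_k -> 'I_n) :
  incr f -> 0 < \det (mxsub f (widen_ord hk) ffact_mx).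
Proof.
move=> incf; pose a := \row_(r < k) ((f r : nat)%:R : R).
pose U := \matrix_(l < k, c < k) (ffact_poly c)`_l.
have U_trig : is_trig_mx U^T.
  by apply/is_trig_mxP => c l cl; rewrite !mxE nth_default ?size_ffact_poly.
have -> : \det (mxsub f (widen_ord hk) ffact_mx) = \det (Vandermonde k a)^T * \det U.
  rewrite -det_mulmx; congr determinant; apply/matrixP => r c.
  rewrite !mxE (@horner_coef_wide _ k) ?size_ffact_poly; last exact: ltn_ord c.
  by apply: eq_bigr => l _; rewrite !mxE mulrC.
rewrite det_tr det_Vandermonde -det_tr det_trig // mulr_gt0 //.
  apply: prodr_gt0 => i _; apply: prodr_gt0 => j ij.
  by rewrite !mxE subr_gt0 ltr_nat incf.
apply: prodr_gt0 => c _; rewrite !mxE.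
have := monic_prod_XsubC (iota 0 c) predT (fun j => j%:R : R).
by rewrite monicE /lead_coef size_ffact_poly => /eqP ->.
Qed.
End FallingFactorial.

Lemma dominant_sum_gt0 (R : realDomainType) (I : finType) (P : pred I) (i0 : I)
    (c w : I -> R) (p u : R) :
  P i0 -> 0 < p -> 0 <= u -> w i0 = p ->
  (forall i, P i -> i != i0 -> 0 <= w i <= u * p) ->
  u * \sum_(i | P i) `|c i| < c i0 -> 0 < \sum_(i | P i) c i * w i.
Proof.
move=> Pi0 p_gt0 u_ge0 wi0 w_small dom.
set B := \sum_(i | P i && (i != i0)) `|c i|.
have B_le : B <= \sum_(i | P i) `|c i| by rewrite [leRHS](bigD1 i0) //= lerDr.
have rest : - (u * p * B) <= \sum_(i | P i && (i != i0)) c i * w i.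
  rewrite mulrC mulr_suml -sumrN; apply: ler_sum => i /andP[Pi ne].
  have /andP[w_ge0 w_le] := w_small i Pi ne.
  rewrite lerNl; apply: le_trans (ler_norm _) _.
  by rewrite normrN normrM (ger0_norm w_ge0); apply: ler_wpM2l.
rewrite (bigD1 i0) //= wi0.
have : u * p * B <= p * (u * \sum_(i | P i) `|c i|).
  by rewrite [u * p]mulrC -mulrA ler_pM2l //; exact: ler_wpM2l.
have : p * (u * \sum_(i | P i) `|c i|) < p * c i0 by rewrite ltr_pM2l.
lra.
Qed.

Lemma near0_mul_lt (R : realFieldType) (a b : R) :
  0 <= b -> 0 < a -> \forall u \near (0^'+)%classic, u * b < a.
Proof.
move=> b_ge0 a_gt0; have ab_gt0 : 0 < a / (b + 1) by rewrite divr_gt0 // ltr_wpDl.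
near=> u.
have u_gt0 : 0 < u by near: u; exact: nbhs_right_gt.
have u_lt : u < a / (b + 1) by near: u; exact: nbhs_right_lt.
apply: (@le_lt_trans _ _ (u * (b + 1))); first by rewrite ler_pM2l // lerDl.
by rewrite -ltr_pdivlMr // ltr_wpDl.
Unshelve. all: by end_near.
Qed.

Lemma sum_expn2 k : ((\sum_(r < k) 2 ^ r).+1 = 2 ^ k)%N.
Proof.
elim: k => [|k IHk]; first by rewrite big_ord0.
by rewrite big_ord_recr /= -addSn IHk expnS mul2n -addnn.
Qed.

Section Dominance.
Variable R : realFieldType.
Variable n' : nat.
Local Notation n := n'.+1.

Definition pow2_diag (u : R) : 'M[R]_n := diag_mx (\row_(l < n) u ^+ (2 ^ l)).

Definition ffact_pow2_mx (u : R) : 'M[R]_n := ffact_mx R n *m pow2_diag u.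

Lemma ffact_pow2_mx_trig u : is_trig_mx (ffact_pow2_mx u).
Proof.
apply/is_trig_mxP => i j ij.
by rewrite /ffact_pow2_mx mul_mx_diag mxE (is_trig_mxP (ffact_mx_trig R n)) ?mul0r.
Qed.

Lemma ffact_pow2_mx_unit u : 0 < u -> ffact_pow2_mx u \in unitmx.
Proof.
move=> u_gt0; rewrite unitmx_mul ffact_mx_unit unitmxE det_diag unitfE.
by rewrite prodf_seq_neq0; apply/allP => l _; rewrite mxE expf_neq0 ?gt_eqF.
Qed.

Lemma det_mxsub_pow2_diag k (h g : 'I_k -> 'I_n) u (N : 'M[R]_n) :
  \det (mxsub h g (pow2_diag u *m N)) = (\prod_r u ^+ (2 ^ h r)) * \det (mxsub h g N).
Proof.
have -> : mxsub h g (pow2_diag u *m N) = diag_mx (\row_r u ^+ (2 ^ h r)) *m mxsub h g N.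
  by rewrite /pow2_diag mul_diag_mx; apply/matrixP => r c; rewrite mul_diag_mx !mxE.
by rewrite det_mulmx det_diag; congr (_ * _); apply: eq_bigr => r _; rewrite mxE.
Qed.

Lemma det_mxsub_ffact_pow2_mx k (f g : 'I_k -> 'I_n) u (N : 'M[R]_n) :
  \det (mxsub f g (ffact_pow2_mx u *m N)) = \sum_(K : {set 'I_n} | #|K| == k)
    \det (mxsub f (enum_nth ord0 k K) (ffact_mx R n)) *
    \det (mxsub (enum_nth ord0 k K) g N) * \prod_r u ^+ (2 ^ enum_nth ord0 k K r).
Proof.
rewrite -mulmxA (det_mxsub_mulmx ord0); apply: eq_bigr => K _.
by rewrite det_mxsub_pow2_diag mulrA mulrAC.
Qed.

(* Any k-set other than {0, ..., k-1} contains some l >= k, and 2^l exceeds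
   2^0 + ... + 2^(k-1). *)
Lemma pow2_weight_le k (hk : (k <= n)%N) (K : {set 'I_n}) (u : R) :
  0 < u -> u <= 1 -> #|K| = k -> K != [set widen_ord hk r | r in 'I_k] ->
  \prod_r u ^+ (2 ^ enum_nth ord0 k K r) <= u * \prod_(r < k) u ^+ (2 ^ r).
Proof.
move=> u_gt0 u_le1 cardK neqK.
have [l lK k_le_l] : exists2 l, l \in K & (k <= l)%N.
  have : ~~ (K \subset [set widen_ord hk r | r in 'I_k]).
    apply: contra neqK => subK; rewrite eqEcard subK cardK card_imset ?card_ord ?leqnn //.
    exact: incr_inj (widen_ord_incr hk).
  case/subsetPn => l lK lK0; exists l => //; rewrite leqNgt; apply: contra lK0 => lk.
  by apply/imsetP; exists (Ordinal lk) => //; apply: val_inj.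
have [r0 r0l] := enum_nthP ord0 cardK lK.
apply: (@le_trans _ _ (u ^+ (2 ^ enum_nth ord0 k K r0))).
  rewrite (bigD1 r0) //=; apply: ler_piMr; first by rewrite exprn_ge0 ?ltW.
  by apply: prodr_ile1 => r _; rewrite exprn_ge0 ?exprn_ile1 ?(ltW u_gt0).
rewrite prodrXr -exprS sum_expn2; apply: ler_wiXn2l => //; first exact: ltW.
by rewrite r0l leq_pexp2l.
Qed.

Section InitialMinors.
Variable N : 'M[R]_n.
Hypothesis initial_minor_gt0 : forall k (hk : (k <= n)%N) (g : 'I_k -> 'I_n),
  incr g -> 0 < \det (mxsub (widen_ord hk) g N).

Lemma near0_ffact_pow2_mx_minor_gt0 k (f g : 'I_k -> 'I_n) : incr f -> incr g ->
  \forall u \near (0^'+)%classic, 0 < \det (mxsub f g (ffact_pow2_mx u *m N)).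
Proof.
move=> incf incg; have hk := incr_leq incf.
set K0 := [set widen_ord hk r | r in 'I_k].
have K0E : enum_nth ord0 k K0 =1 widen_ord hk.
  exact: enum_nth_imset_incr (widen_ord_incr hk).
have cardK0 : #|K0| = k by rewrite card_imset ?card_ord //; exact: incr_inj (widen_ord_incr hk).
pose c K := \det (mxsub f (enum_nth ord0 k K) (ffact_mx R n)) *
  \det (mxsub (enum_nth ord0 k K) g N).
have cK0_gt0 : 0 < c K0.
  rewrite /c (eq_mxsub _ _ (frefl f) K0E) (eq_mxsub _ _ K0E (frefl g)).
  by rewrite mulr_gt0 ?ffact_mx_minor_gt0 ?initial_minor_gt0.
near=> u.
have u_gt0 : 0 < u by near: u; exact: nbhs_right_gt.
have u_le1 : u <= 1 by near: u; exact: nbhs_right_le ltr01.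
rewrite det_mxsub_ffact_pow2_mx.
apply: (dominant_sum_gt0 (i0 := K0) (c := c) (p := \prod_(r < k) u ^+ (2 ^ r)) (u := u)).
- by rewrite cardK0.
- by rewrite prodr_gt0 // => r _; rewrite exprn_gt0.
- exact: ltW.
- by apply: eq_bigr => r _; rewrite K0E.
- move=> K /eqP cardK neqK; rewrite pow2_weight_le // andbT.
  by rewrite prodr_ge0 // => r _; rewrite exprn_ge0 ?ltW.
- near: u; apply: near0_mul_lt cK0_gt0.
  by rewrite sumr_ge0.
Unshelve. all: by end_near.
Qed.

Lemma exists_trig_totally_positive : exists L : 'M[R]_n,
  [/\ L \in unitmx, is_trig_mx L &
    forall k (f g : 'I_k -> 'I_n), incr f -> incr g -> 0 < \det (mxsub f g (L *m N))].
Proof.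
have all_minors : \forall u \near (0^'+)%classic,
    forall (k : 'I_n.+1) (f g : {ffun 'I_k -> 'I_n}), incr f -> incr g ->
    0 < \det (mxsub f g (ffact_pow2_mx u *m N)).
  apply: filter_forall => k; apply: filter_forall => f; apply: filter_forall => g.
  have [[incf incg]|not_incr] := pselect (incr f /\ incr g).
    by apply: filterS (near0_ffact_pow2_mx_minor_gt0 incf incg) => u + _ _.
  by apply: nearW => u incf incg; case: not_incr.
have [u [/= u_gt0 u_minors]] := filter_ex (filterI (nbhs_right_gt 0) all_minors).
exists (ffact_pow2_mx u); split; [exact: ffact_pow2_mx_unit | exact: ffact_pow2_mx_trig |].
move=> k f g incf incg; have hk : (k < n.+1)%N by rewrite ltnS (incr_leq incf).
have := u_minors (Ordinal hk) [ffun r => f r] [ffun r => g r].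
rewrite (eq_mxsub f g (ffunE _) (ffunE _)); apply.
  by move=> i j ij; rewrite !ffunE incf.
by move=> i j ij; rewrite !ffunE incg.
Qed.
End InitialMinors.
End Dominance.

(** * Flag minors and the closure of the totally positive part *)

Section MinorContinuity.
Variable R : realType.

Lemma continuous_mx_entry m p (i : 'I_m) (j : 'I_p) :
  continuous (fun X : 'M[R]_(m, p) => X i j).
Proof.
move=> X A /nbhs_ballP [e /= e_gt0 eA]; apply/nbhs_ballP; exists e => //= Y [_ XY].
exact: eA (XY i j).
Qed.

Lemma continuous_det_mxsub m k (f g : 'I_k -> 'I_m) :
  continuous (fun X : 'M[R]_m => \det (mxsub f g X)).
Proof.
have -> : (fun X : 'M[R]_m => \det (mxsub f g X)) =
    (fun X => \sum_(s : 'S_k) (-1) ^+ s * \prod_i X (f i) (g (s i))).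
  apply: funext => X; apply: eq_bigr => s _; congr (_ * _).
  by apply: eq_bigr => i _; rewrite mxE.
apply: (@continuous_big _ _ +%R 0 predT add_continuous) => s _ X.
have prod_cont : continuous (fun X : 'M[R]_m => \prod_i X (f i) (g (s i))).
  apply: (@continuous_big R _ *%R 1 predT (@mul_continuous R) _ (index_enum 'I_k)
    (fun i (X : 'M[R]_m) => X (f i) (g (s i)))) => i _.
  exact: continuous_mx_entry.
exact: (continuousM (@cst_continuous _ _ ((-1) ^+ s : R) X) (prod_cont X)).
Qed.

Lemma continuous_det m : continuous (fun X : 'M[R]_m => \det X).
Proof.
have -> : (fun X : 'M[R]_m => \det X) = (fun X => \det (mxsub id id X)).
  by apply: funext => X; rewrite mxsub_eq_id.
exact: continuous_det_mxsub.
Qed.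
End MinorContinuity.

Section FlagVariety.
Variable R : realType.
Variable n' : nat.
Local Notation n := n'.+1.
Implicit Types (F L M X Y : 'M[R]_n) (I J K : {set 'I_n}).

Lemma flag_minorE M K k (hk : (k <= n)%N) :
  #|K| = k -> flag_minor M K = \det (mxsub (widen_ord hk) (enum_nth ord0 k K) M).
Proof.
move=> cardK; move: hk; rewrite -cardK => hk; congr determinant.
by apply/matrixP => i j; rewrite !mxE (enum_val_nth ord0); congr (M _ _); apply: val_inj.
Qed.

Lemma flag_minor_set0 M K : #|K| = 0%N -> flag_minor M K = 1.
Proof. by move=> cardK; rewrite (flag_minorE _ (leq0n n) cardK) det_mx00. Qed.

Lemma flag_minor_trig_mulmx L M I : is_trig_mx L ->
  flag_minor (L *m M) I = (\prod_(l < n | (l < #|I|)%N) L l l) * flag_minor M I.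
Proof.
move=> /is_trig_mxP L_trig; have hI := card_set_ord_le I; rewrite /flag_minor.
set top := @top_rows n I; set cols := (fun j : 'I_#|I| => _).
have topE r : top r = widen_ord hI r by apply: val_inj.
have -> : mxsub top cols (L *m M) = mxsub top top L *m mxsub top cols M.
  apply/matrixP => i j; rewrite !mxE (bigID (fun l : 'I_n => (l < #|I|)%N)) /=.
  rewrite [X in _ + X]big1 ?addr0 => [|l]; last first.
    by rewrite -leqNgt => hl; rewrite L_trig ?mul0r //; exact: leq_trans (ltn_ord i) hl.
  by rewrite (big_ord_narrow hI); apply: eq_bigr => r _; rewrite !mxE !topE.
rewrite det_mulmx det_trig; last by apply/is_trig_mxP => i j ij; rewrite mxE L_trig.
by rewrite (big_ord_narrow hI); congr (_ * _); apply: eq_bigr => r _; rewrite mxE !topE.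
Qed.

Lemma trig_unit_diag_neq0 L : is_trig_mx L -> L \in unitmx -> forall l, L l l != 0.
Proof.
move=> L_trig; rewrite unitmxE det_trig // unitfE prodf_seq_neq0 => /allP L_diag l.
exact: L_diag (mem_index_enum l).
Qed.

Lemma same_flag_unit X Y : same_flag X Y -> X \in unitmx -> Y \in unitmx.
Proof. by case=> L [Lu _ ->] Xu; rewrite unitmx_mul Lu. Qed.

Lemma same_flag_flag_minor_mul X Y I J : same_flag X Y -> #|I| = #|J| ->
  exists2 c, 0 < c & flag_minor Y I * flag_minor Y J = c * (flag_minor X I * flag_minor X J).
Proof.
case=> L [Lu L_trig ->] cardIJ; rewrite !flag_minor_trig_mulmx // cardIJ.
set d := \prod_(l < n | _) L l l; exists (d ^+ 2); last by rewrite mulrACA -expr2.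
rewrite exprn_even_gt0 //= prodf_seq_neq0; apply/allP => l _; apply/implyP => _.
exact: trig_unit_diag_neq0.
Qed.

Lemma totally_positive_flag_minor_gt0 M I : totally_positive M -> 0 < flag_minor M I.
Proof.
move=> M_tp; apply: M_tp => // i j ij; rewrite !(enum_val_nth ord0).
exact: (enum_nth_incr ord0 erefl).
Qed.

Lemma totally_positive_Fl_pos M : totally_positive M -> Fl_pos M.
Proof.
move=> M_tp; split.
  have := M_tp n id id (fun i j ij => ij) (fun i j ij => ij).
  by rewrite mxsub_eq_id // /flag_rep unitmxE unitfE => /gt_eqF ->.
exists M; split => //; exists 1%:M; split; [exact: unitmx1 | exact: scalar_mx_is_trig |].
by rewrite mul1mx.
Qed.
Lemma open_flag_minor_mul_lt0 I J :
  open [set X : 'M[R]_n | X \in unitmx /\ flag_minor X I * flag_minor X J < 0]%classic.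
Proof.
have -> : [set X : 'M[R]_n | X \in unitmx /\ flag_minor X I * flag_minor X J < 0]%classic =
    ((fun X => \det X) @^-1` [set r | r != 0] `&`
     (fun X => flag_minor X I * flag_minor X J) @^-1` [set r | r < 0])%classic.
  by apply/seteqP; split => X /=; rewrite unitmxE unitfE.
apply: openI; apply: open_comp; rewrite ?open_neq ?open_lt // => X _.
  exact: continuous_det.
have minor_cont K : continuous (fun X : 'M[R]_n => flag_minor X K).
  exact: continuous_det_mxsub.
exact: continuousM (minor_cont I X) (minor_cont J X).
Qed.

Lemma Fl_nonneg_flag_minor_mul_ge0 F I J : Fl_nonneg F -> #|I| = #|J| ->
  0 <= flag_minor F I * flag_minor F J.
Proof.
case=> F_rep F_closure cardIJ; rewrite leNgt; apply/negP => F_neg.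
pose S := [set X : 'M[R]_n | X \in unitmx /\ flag_minor X I * flag_minor X J < 0]%classic.
have S_open : flag_open_set S.
  split; first exact: open_flag_minor_mul_lt0.
  split=> [X [] // | X Y XY [Xu X_neg]]; split; first exact: same_flag_unit XY Xu.
  by have [c c_gt0 ->] := same_flag_flag_minor_mul XY cardIJ; rewrite pmulr_rlt0.
have [N [[_ N_neg] [_ [A [A_tp AN]]]]] := F_closure S S_open (conj F_rep F_neg).
have [c c_gt0 cE] := same_flag_flag_minor_mul AN cardIJ.
move: N_neg; rewrite cE pmulr_rlt0 // ltNge ltW //.
by rewrite mulr_gt0 ?totally_positive_flag_minor_gt0.
Qed.

Lemma exists_same_flag_flag_minor_ge0 F :
  (forall I J, #|I| = #|J| -> 0 <= flag_minor F I * flag_minor F J) ->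
  exists M, same_flag F M /\ forall I, 0 <= flag_minor M I.
Proof.
move=> same_sign.
pose sg k : R := if [exists I : {set 'I_n}, (#|I| == k) && (flag_minor F I < 0)] then -1 else 1.
have sg_sq k : sg k * sg k = 1 by rewrite /sg; case: ifP; rewrite ?mulrNN mulr1.
have sg0 : sg 0%N = 1.
  rewrite /sg; case: existsP => // -[I /andP[/eqP cardI]].
  by rewrite flag_minor_set0 // ltr10.
have sg_telescope k : \prod_(l < k) (sg l.+1 * sg l) = sg k.
  elim: k => [|k IHk]; first by rewrite big_ord0 sg0.
  by rewrite big_ord_recr /= IHk mulrCA sg_sq mulr1.
(* Scaling row l by sg (l+1) * sg l multiplies the flag minors of size k by sg k. *)
pose D : 'M[R]_n := diag_mx (\row_(l < n) (sg l.+1 * sg l)).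
exists (D *m F); split.
  exists D; split; [|exact: diag_mx_is_trig|by []].
  rewrite unitmxE det_diag unitfE prodf_seq_neq0; apply/allP => l _; rewrite mxE.
  by rewrite mulf_neq0 // /sg; case: ifP; rewrite ?oppr_eq0 oner_eq0.
move=> I; rewrite flag_minor_trig_mulmx ?diag_mx_is_trig //.
have -> : \prod_(l < n | (l < #|I|)%N) D l l = sg #|I|.
  rewrite -sg_telescope (big_ord_widen n (fun l => sg l.+1 * sg l) (card_set_ord_le I)).
  by apply: eq_bigr => l _; rewrite !mxE eqxx mulr1n.
rewrite /sg; case: existsP => [[J /andP[/eqP cardJ J_neg]] | no_neg].
  by rewrite mulN1r oppr_ge0 -(nmulr_lge0 _ J_neg) same_sign.
rewrite mul1r leNgt; apply/negP => I_neg; apply: no_neg.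
by exists I; rewrite eqxx I_neg.
Qed.

Lemma flag_minor_exists_neq0 M k : (k <= n)%N -> M \in unitmx ->
  exists I, #|I| = k /\ flag_minor M I != 0.
Proof.
move=> hk Mu; have [//|no_I] := pselect (exists I, #|I| = k /\ flag_minor M I != 0).
have one : \det (mxsub (widen_ord hk) (widen_ord hk) (M *m invmx M)) = 1.
  by rewrite mulmxV // (_ : mxsub _ _ 1%:M = 1%:M) ?det1 //; apply/matrixP => i j; rewrite !mxE.
have : \det (mxsub (widen_ord hk) (widen_ord hk) (M *m invmx M)) = 0.
  rewrite (det_mxsub_mulmx ord0); apply: big1 => K /eqP cardK.
  have -> : \det (mxsub (widen_ord hk) (enum_nth ord0 k K) M) = 0.
    by rewrite -(flag_minorE _ hk cardK); apply/eqP; apply: contra_notT no_I => nzK; exists K.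
  by rewrite mul0r.
by rewrite one => /eqP; rewrite oner_eq0.
Qed.

Lemma initial_minor_mulmx_gt0 M (G : 'M[R]_n) :
  M \in unitmx -> (forall I, 0 <= flag_minor M I) -> totally_positive G ->
  forall k (hk : (k <= n)%N) (g : 'I_k -> 'I_n), incr g ->
  0 < \det (mxsub (widen_ord hk) g (M *m G)).
Proof.
move=> Mu M_ge0 G_tp k hk g incg; rewrite (det_mxsub_mulmx ord0).
have G_minor_gt0 K : #|K| = k -> 0 < \det (mxsub (enum_nth ord0 k K) g G).
  by move=> cardK; apply: G_tp => //; exact: enum_nth_incr.
have term_ge0 K : #|K| == k -> 0 <= \det (mxsub (widen_ord hk) (enum_nth ord0 k K) M) *
    \det (mxsub (enum_nth ord0 k K) g G).
  by move=> /eqP cardK; rewrite -(flag_minorE _ hk cardK) mulr_ge0 // ltW // G_minor_gt0.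
rewrite lt0r sumr_ge0 // andbT; apply/eqP => /(psumr_eq0P term_ge0) terms0.
have [K [cardK nzK]] := flag_minor_exists_neq0 hk Mu.
move/eqP: (terms0 K (introT eqP cardK)); rewrite -(flag_minorE _ hk cardK) mulf_eq0.
by rewrite (negPf nzK) gt_eqF // G_minor_gt0.
Qed.

Lemma Fl_nonneg_of_flag_minor_ge0 M :
  M \in unitmx -> (forall I, 0 <= flag_minor M I) -> Fl_nonneg M.
Proof.
move=> Mu M_ge0; split => // S [S_open [_ S_sat]] SM.
have /nbhs_ballP [e e_gt0 ballS] : nbhs M S by move: S_open; rewrite openE => /(_ M SM).
have [v v_gt1 near_M] := ball_mulmx_sech_mx M e_gt0.
have G_tp : totally_positive (sech_mx n v) by move=> k f g; exact: sech_mx_minor_gt0.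
have [L [Lu L_trig LN_tp]] :=
  exists_trig_totally_positive (initial_minor_mulmx_gt0 Mu M_ge0 G_tp).
exists (L *m (M *m sech_mx n v)); split; last exact: totally_positive_Fl_pos.
by apply: S_sat (ballS _ near_M); exists L.
Qed.

Lemma Fl_nonneg_same_flag F M : flag_rep F -> same_flag F M -> Fl_nonneg M -> Fl_nonneg F.
Proof.
move=> F_rep FM [_ M_closure]; split => // S S_open SF.
by apply: M_closure => //; case: S_open => _ [_ S_sat]; exact: S_sat SF.
Qed.
End FlagVariety.

Theorem mainTheorem1 (R : realType) (n : nat) (hn : (1 <= n)%N) (F : 'M[R]_n) :
  flag_rep F ->
  (Fl_nonneg F <->
   exists M : 'M[R]_n, same_flag F M /\ forall I : {set 'I_n}, 0 <= flag_minor M I).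
Proof.
case: n hn F => [//|n'] _ F F_rep; split.
  move=> F_nonneg; apply: exists_same_flag_flag_minor_ge0 => I J.
  exact: Fl_nonneg_flag_minor_mul_ge0.
case=> M [FM M_ge0]; apply: (Fl_nonneg_same_flag F_rep FM).
exact: Fl_nonneg_of_flag_minor_ge0 (same_flag_unit FM F_rep) M_ge0.
Qed.
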